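(* Let $\eta>0$ and let $\mathbf x^*=(\mathbf u^*,\mathbf v^*,\mathbf t^* )$ be an optimal solution of $$\min_{(\mathbf u,\mathbf v,\mathbf t)\in\mathcal X}\ h_\eta(\mathbf u,\mathbf v,\mathbf t):=\frac{1}{4\eta}\sum_{i,j=1}^n t_{ij}^2+\tau\langle e^{-\mathbf u/\tau},\mathbf a\rangle+\tau\langle e^{-\mathbf v/\tau},\mathbf b\rangle,$$ where $\mathcal X=\{(\mathbf u,\mathbf v,\mathbf t):\mathbf u,\mathbf v\in\mathbb{R}^n,\mathbf t\in\mathbb{R}^{n\times n},t_{ij}\ge0,\ t_{ij}\ge u_i+v_j-C_{ij}\ \forall i,j\}$. Then $\mathbf x^*\in V_D$, where $D=\|C\|_\infty+\eta(\alpha+\beta)+\tau\log\big(\frac{\alpha+\beta}{2}\big)-\tau\min\{\log a_{min},\log b_{min}\}$ and $V_D=\{(\mathbf u,\mathbf v,\mathbf t):\ \tau\log\big(\frac{2a_i}{\alpha+\beta}\big)\le u_i\le D,\ \tau\log\big(\frac{2b_j}{\alpha+\beta}\big)\le v_j\le D\ \forall i,j\in[n]\}$.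
   Context: Let $n\ge1$, $C\in\mathbb{R}^{n\times n}$ with nonnegative entries and $\|C\|_\infty=\max_{i,j}|C_{ij}|$; $\mathbf a,\mathbf b\in\mathbb{R}^n$ with strictly positive entries, $\alpha=\sum_i a_i$, $\beta=\sum_i b_i$, $a_{min}=\min_i a_i$, $b_{min}=\min_i b_i$; $\tau>0$. $e^{-\mathbf u/\tau}$ denotes the entrywise exponential. *)

From HB Require Import structures.
From mathcomp Require Import all_boot all_order all_algebra.
From mathcomp Require Import all_classical all_reals all_analysis.
Set Implicit Arguments. Unset Strict Implicit. Unset Printing Implicit Defensive.
Import Order.TTheory GRing.Theory Num.Theory.
Local Open Scope ring_scope.

Definition mx_infnorm (R : realType) (n : nat) (C : 'M[R]_n) : R :=
  \big[Num.max/0]_(i < n) \big[Num.max/0]_(j < n) `|C i j|.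

Definition feasX (R : realType) (n : nat) (C : 'M[R]_n)
  (u v : 'I_n -> R) (t : 'M[R]_n) : Prop :=
  forall i j, 0 <= t i j /\ u i + v j - C i j <= t i j.

Definition h_eta (R : realType) (n : nat) (tau eta : R) (a b : 'I_n -> R)
  (u v : 'I_n -> R) (t : 'M[R]_n) : R :=
  (4 * eta)^-1 * (\sum_(i < n) \sum_(j < n) t i j ^+ 2)
  + tau * (\sum_(i < n) expR (- u i / tau) * a i)
  + tau * (\sum_(j < n) expR (- v j / tau) * b j).

Definition is_optimal (R : realType) (n : nat) (C : 'M[R]_n) (tau eta : R)
  (a b : 'I_n -> R) (u v : 'I_n -> R) (t : 'M[R]_n) : Prop :=
  feasX C u v t /\
  forall u' v' t', feasX C u' v' t' ->
    h_eta tau eta a b u v t <= h_eta tau eta a b u' v' t'.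

From HB Require Import structures.
From mathcomp Require Import all_boot all_order all_algebra.
From mathcomp Require Import all_classical all_reals all_analysis.
From mathcomp Require Import ring lra.
Import Order.TTheory GRing.Theory Num.Theory.
Local Open Scope ring_scope.

(* Three comparisons with the optimum x* = (u, v, t) give the bounds.
   (1) Feasibility is invariant under (u, v) -> (u + c, v - c), which rescales
   the masses S_a = <exp(-u/tau), a> and S_b = <exp(-v/tau), b> by k and 1/k;
   optimality over all k > 0 forces S_a = S_b.
   (2) Comparing with the feasible point 0 gives tau (S_a + S_b) <= tau (alpha + beta),
   so every term exp(-u_i/tau) a_i is at most (alpha + beta)/2: these are the lower bounds.
   (3) Decreasing u_i by a small d while lowering row i of t by d is feasible;
   first-order optimality yields sum_j t_ij <= 2 eta exp(-u_i/tau) a_i <= eta (alpha + beta).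
   The upper bounds then follow from u_i + v_j - C_ij <= t_ij and the lower bound on v_j.
   Everything for v follows from the statement for u by transposition. *)

Lemma ler_sum_term {R : numDomainType} {n} (F : 'I_n -> R) i :
  (forall k, 0 <= F k) -> F i <= \sum_k F k.
Proof. by move=> F_ge0; rewrite (bigD1 i) //= lerDl sumr_ge0. Qed.

Lemma sumrD_gt0 {R : numDomainType} {n} (a b : 'I_n -> R) (i : 'I_n) :
  (forall k, 0 < a k) -> (forall k, 0 < b k) -> 0 < \sum_k a k + \sum_k b k.
Proof.
move=> a_gt0 b_gt0; apply: lt_le_trans (a_gt0 i) _; rewrite -[a i]addr0.
apply: lerD; first by apply: (ler_sum_term a) => k; apply: ltW.
by apply: sumr_ge0 => k _; apply: ltW.
Qed.

Lemma sumr_update {R : zmodType} {n} (F G : 'I_n -> R) i :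
  (forall k, k != i -> F k = G k) -> \sum_k F k = \sum_k G k + (F i - G i).
Proof.
move=> FG; rewrite (bigD1 i) //= [in RHS](bigD1 i) //= (eq_bigr G) //.
by rewrite addrAC addrCA subrr addr0 addrC.
Qed.

Lemma sum_sqr_truncate {R : realDomainType} {n} (x : 'I_n -> R) d :
  \sum_j (Num.max 0 (x j - d)) ^+ 2 <=
  \sum_j x j ^+ 2 - 2 * d * \sum_j x j + n%:R * d ^+ 2.
Proof.
have -> : \sum_j x j ^+ 2 - 2 * d * \sum_j x j + n%:R * d ^+ 2 =
          \sum_(j < n) (x j - d) ^+ 2.
  rewrite [in RHS](eq_bigr (fun j => x j ^+ 2 - 2 * d * x j + d ^+ 2)); last by move=> j _; ring.
  by rewrite !big_split /= sumrN sumr_const card_ord mulr_sumr [n%:R * _]mulr_natl.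
by apply: ler_sum => j _; case: (leP 0 (x j - d)) => _; rewrite ?lexx ?expr0n ?sqr_ge0.
Qed.

Lemma mx_infnorm_ge {R : realType} {n} (C : 'M[R]_n) i j : C i j <= mx_infnorm C.
Proof.
apply: le_trans (real_ler_norm (num_real _)) _.
apply: le_trans (le_bigmax _ (fun i => \big[Num.max/0]_(j < n) `|C i j|) i).
exact: le_bigmax.
Qed.

Lemma eq_of_le_scale {R : realFieldType} (x y : R) : 0 <= x -> 0 <= y ->
  (forall k, 0 < k -> x + y <= k * x + k^-1 * y) -> x = y.
Proof.
move=> x_ge0 y_ge0 le_scale; have [x0|x_neq0] := eqVneq x 0.
  have := le_scale 2 (ltr0Sn _ 1); rewrite x0 mulr0 !add0r => y_le.
  by apply/esym/eqP; rewrite eq_le y_ge0 andbT; lra.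
have x_gt0 : 0 < x by rewrite lt_def x_neq0.
have xy_gt0 : 0 < x + y by lra.
(* At k = (x + y) / (2 x) the hypothesis says exactly (x - y)^2 <= 0. *)
have := le_scale ((x + y) / (2 * x)) (divr_gt0 xy_gt0 (mulr_gt0 (ltr0Sn _ 1) x_gt0)).
rewrite invf_div.
have -> : (x + y) / (2 * x) * x + 2 * x / (x + y) * y = (x + y) / 2 + 2 * x * y / (x + y).
  by field; rewrite !gt_eqF.
rewrite -subr_ge0.
have -> : (x + y) / 2 + 2 * x * y / (x + y) - (x + y) = - ((x - y) ^+ 2 / (2 * (x + y))).
  by field; rewrite gt_eqF.
rewrite oppr_ge0 pmulr_lle0 ?invr_gt0 ?mulr_gt0 // => sq_le0.
by apply/eqP; rewrite -subr_eq0 -sqrf_eq0 eq_le sq_le0 sqr_ge0.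
Qed.

Lemma ler_of_forall_small {R : realFieldType} (T Z M delta : R) : 0 < delta -> 0 <= M ->
  (forall d, 0 < d -> d <= delta -> d * T <= d * Z + d ^+ 2 * M) -> T <= Z.
Proof.
move=> delta_gt0 M_ge0 small; apply/ler_addgt0Pr => e e_gt0.
pose d := Num.min delta (e / (M + 1)).
have d_gt0 : 0 < d by rewrite lt_min delta_gt0 divr_gt0 //; lra.
have dM_le : d * M <= e.
  apply: le_trans (_ : d * (M + 1) <= e).
    by rewrite ler_pM2l //; lra.
  by rewrite -ler_pdivlMr ?ge_min ?lexx ?orbT //; lra.
have d_le : d <= delta by rewrite ge_min lexx.
have := small d d_gt0 d_le.
rewrite expr2 -mulrA -mulrDr ler_pM2l //; lra.
Qed.

Lemma expR_le_quad {R : realType} (x : R) : 0 <= x -> x <= 1 / 2 ->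
  expR x <= 1 + x + 2 * x ^+ 2.
Proof.
move=> x_ge0 x_le; have gt0 : 0 < 1 - x by lra.
have le_inv : expR x <= (1 - x)^-1.
  rewrite -[expR x]invrK -expRN lef_pV2 ?posrE ?expR_gt0 //.
  exact: expR_ge1Dx.
apply: le_trans le_inv _; rewrite -div1r ler_pdivrMr //.
have : 0 <= x ^+ 2 * (1 - 2 * x) by rewrite mulr_ge0 ?sqr_ge0 //; lra.
nra.
Qed.

Lemma le_mul_ln_of_expR {R : realType} {tau x S y : R} : 0 < tau -> 0 < x -> 0 < S ->
  expR (- y / tau) * x <= S / 2 -> tau * ln (2 * x / S) <= y.
Proof.
move=> tau_gt0 x_gt0 S_gt0; rewrite mulNr expRN.
set E := expR (y / tau); have E_gt0 : 0 < E := expR_gt0 _.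
have -> : E^-1 * x = x / E by rewrite mulrC.
rewrite ler_pdivrMr // => le.
have le_exp : 2 * x / S <= E by rewrite ler_pdivrMr //; lra.
rewrite mulrC -ler_pdivlMr // -ler_expR lnK // posrE.
by rewrite divr_gt0 // mulr_gt0.
Qed.

Lemma ln_mul2_div {R : realType} (x S : R) : 0 < x -> 0 < S ->
  ln (2 * x / S) = ln x - ln (S / 2).
Proof.
move=> x_gt0 S_gt0; have -> : 2 * x / S = x / (S / 2) by field; rewrite gt_eqF.
by rewrite ln_div // posrE divr_gt0.
Qed.

Definition sum_sq {R : realType} {n} (t : 'M[R]_n) : R := \sum_i \sum_j t i j ^+ 2.

Definition exp_mass {R : realType} {n} (tau : R) (a u : 'I_n -> R) : R :=
  \sum_i expR (- u i / tau) * a i.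

Lemma h_etaE {R : realType} {n} (tau eta : R) (a b u v : 'I_n -> R) (t : 'M[R]_n) :
  h_eta tau eta a b u v t =
  (4 * eta)^-1 * sum_sq t + tau * exp_mass tau a u + tau * exp_mass tau b v.
Proof. by []. Qed.

Lemma sum_sq0 {R : realType} {n} : sum_sq (0 : 'M[R]_n) = 0.
Proof. by apply: big1 => i _; apply: big1 => j _; rewrite mxE expr0n. Qed.

Lemma sum_sq_ge0 {R : realType} {n} (t : 'M[R]_n) : 0 <= sum_sq t.
Proof. by apply: sumr_ge0 => i _; apply: sumr_ge0 => j _; apply: sqr_ge0. Qed.

Lemma exp_mass_ge0 {R : realType} {n} (tau : R) (a u : 'I_n -> R) :
  (forall i, 0 <= a i) -> 0 <= exp_mass tau a u.
Proof. by move=> a_ge0; apply: sumr_ge0 => i _; rewrite mulr_ge0 ?expR_ge0. Qed.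

Lemma exp_mass_shift {R : realType} {n} (tau c : R) (a u : 'I_n -> R) : 0 < tau ->
  exp_mass tau a (fun i => u i + c) = expR (- c / tau) * exp_mass tau a u.
Proof.
move=> tau_gt0; rewrite /exp_mass mulr_sumr; apply: eq_bigr => i _.
by rewrite mulrA -expRD; congr (expR _ * _); field; rewrite gt_eqF.
Qed.

Lemma exp_mass0 {R : realType} {n} (tau : R) (a : 'I_n -> R) :
  exp_mass tau a (fun=> 0) = \sum_i a i.
Proof. by apply: eq_bigr => i _; rewrite oppr0 mul0r expR0 mul1r. Qed.

Lemma feasX_shift {R : realType} {n} {C : 'M[R]_n} {u v t} c :
  feasX C u v t -> feasX C (fun i => u i + c) (fun j => v j - c) t.
Proof.
move=> feas i j; have [t_ge0 le_t] := feas i j; split=> //.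
by rewrite addrACA subrr addr0.
Qed.

Lemma feasX0 {R : realType} {n} {C : 'M[R]_n} :
  (forall i j, 0 <= C i j) -> feasX C (fun=> 0) (fun=> 0) 0.
Proof. by move=> C_ge0 i j; rewrite mxE addr0 sub0r oppr_le0. Qed.

Definition lower_at {R : realType} {n} (u : 'I_n -> R) i d : 'I_n -> R :=
  fun k => if k == i then u k - d else u k.

Definition truncate_row {R : realType} {n} (t : 'M[R]_n) i d : 'M[R]_n :=
  \matrix_(k, j) if k == i then Num.max 0 (t k j - d) else t k j.

Lemma feasX_lower_truncate {R : realType} {n} {C : 'M[R]_n} {u v t} i d :
  feasX C u v t -> feasX C (lower_at u i d) v (truncate_row t i d).
Proof.
move=> feas k j; rewrite /lower_at mxE; case: eqP => [->|_]; last exact: feas.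
have [_ le_t] := feas i j; split; first by rewrite le_max lexx.
by rewrite le_max; apply/orP; right; lra.
Qed.

Lemma sum_sq_truncate_row {R : realType} {n} (t : 'M[R]_n) i d :
  sum_sq (truncate_row t i d) <= sum_sq t - 2 * d * \sum_j t i j + n%:R * d ^+ 2.
Proof.
rewrite /sum_sq (sumr_update _ (fun k => \sum_j t k j ^+ 2) i); last first.
  by move=> k /negbTE ki; apply: eq_bigr => j _; rewrite mxE ki.
have -> : \sum_j truncate_row t i d i j ^+ 2 = \sum_j (Num.max 0 (t i j - d)) ^+ 2.
  by apply: eq_bigr => j _; rewrite mxE eqxx.
by have := sum_sqr_truncate (t i) d; lra.
Qed.

Lemma exp_mass_lower_at {R : realType} {n} (tau : R) (a u : 'I_n -> R) i d :
  exp_mass tau a (lower_at u i d) =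
  exp_mass tau a u + expR (- u i / tau) * a i * (expR (d / tau) - 1).
Proof.
rewrite /exp_mass (sumr_update _ (fun k => expR (- u k / tau) * a k) i); last first.
  by move=> k /negbTE ki; rewrite /lower_at ki.
rewrite /lower_at eqxx opprB -[d - u i]addrC mulrDl expRD; congr (_ + _); ring.
Qed.

Lemma h_eta_tr {R : realType} {n} (tau eta : R) (a b u v : 'I_n -> R) (t : 'M[R]_n) :
  h_eta tau eta b a v u t^T = h_eta tau eta a b u v t.
Proof.
have sum_sq_tr : sum_sq t^T = sum_sq t.
  by rewrite /sum_sq exchange_big; apply: eq_bigr => i _; apply: eq_bigr => j _; rewrite mxE.
by rewrite !h_etaE sum_sq_tr addrAC.
Qed.

Lemma feasX_tr {R : realType} {n} {C : 'M[R]_n} {u v t} :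
  feasX C u v t -> feasX C^T v u t^T.
Proof. by move=> feas j i; rewrite !mxE [v j + _]addrC; apply: feas. Qed.

Lemma is_optimal_tr {R : realType} {n} {C : 'M[R]_n} {tau eta : R} {a b u v t} :
  is_optimal C tau eta a b u v t -> is_optimal C^T tau eta b a v u t^T.
Proof.
move=> [feas le_h]; split; first exact: feasX_tr.
move=> u' v' t' /feasX_tr feas'; rewrite h_eta_tr -[t']trmxK h_eta_tr.
by apply: le_h; rewrite -[C]trmxK.
Qed.

Section OptimalSolution.

Context {R : realType} {n : nat} {C : 'M[R]_n} {a b : 'I_n -> R} {tau eta : R}.
Context {u v : 'I_n -> R} {t : 'M[R]_n}.
Hypotheses (a_gt0 : forall i, 0 < a i) (b_gt0 : forall j, 0 < b j).
Hypotheses (tau_gt0 : 0 < tau) (eta_gt0 : 0 < eta).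
Hypothesis C_ge0 : forall i j, 0 <= C i j.
Hypothesis opt : is_optimal C tau eta a b u v t.

Lemma optimal_exp_mass_eq : exp_mass tau a u = exp_mass tau b v.
Proof.
apply: eq_of_le_scale; [exact/exp_mass_ge0/(fun i => ltW (a_gt0 i))|
  exact/exp_mass_ge0/(fun j => ltW (b_gt0 j))|move=> k k_gt0].
pose c := - (tau * ln k).
have expR_c : expR (- c / tau) = k.
  by rewrite opprK mulrC mulKf ?gt_eqF // lnK.
have := opt.2 _ _ _ (feasX_shift c opt.1).
rewrite !h_etaE !exp_mass_shift // expR_c mulNr expRN expR_c.
by rewrite -!addrA lerD2l -!mulrDr ler_pM2l.
Qed.

Lemma optimal_exp_mass_le : exp_mass tau a u <= (\sum_i a i + \sum_j b j) / 2.
Proof.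
have := opt.2 _ _ _ (feasX0 C_ge0).
rewrite !h_etaE -optimal_exp_mass_eq !exp_mass0 sum_sq0 mulr0 add0r => le.
have quad_ge0 : 0 <= (4 * eta)^-1 * sum_sq t.
  by rewrite mulr_ge0 ?sum_sq_ge0 // invr_ge0 mulr_ge0 // ltW.
have : tau * (2 * exp_mass tau a u) <= tau * (\sum_i a i + \sum_j b j) by lra.
by rewrite ler_pM2l //; lra.
Qed.

Lemma optimal_exp_term_le i : expR (- u i / tau) * a i <= (\sum_i a i + \sum_j b j) / 2.
Proof.
apply: le_trans optimal_exp_mass_le.
by apply: (ler_sum_term (fun k => expR (- u k / tau) * a k)) => k; rewrite mulr_ge0 ?expR_ge0 ?ltW.
Qed.

Lemma optimal_u_ge i : tau * ln (2 * a i / (\sum_i a i + \sum_j b j)) <= u i.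
Proof.
by apply: le_mul_ln_of_expR (optimal_exp_term_le i) => //; apply: sumrD_gt0.
Qed.

Lemma optimal_row_perturb i d : 0 < d -> d <= tau / 2 ->
  d * \sum_j t i j <= d * (2 * eta * (expR (- u i / tau) * a i))
    + d ^+ 2 * (n%:R / 2 + 4 * eta * (expR (- u i / tau) * a i) / tau).
Proof.
move=> d_gt0 d_le; set K := expR (- u i / tau) * a i.
have K_ge0 : 0 <= K by rewrite mulr_ge0 ?expR_ge0 ?ltW.
have exp_le : tau * (K * (expR (d / tau) - 1)) <= K * d + 2 * K * d ^+ 2 / tau.
  have dt_ge0 : 0 <= d / tau by rewrite divr_ge0 ?ltW.
  have dt_le : d / tau <= 1 / 2 by rewrite ler_pdivrMr //; lra.
  have -> : K * d + 2 * K * d ^+ 2 / tau = tau * (K * (d / tau + 2 * (d / tau) ^+ 2)).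
    by field; rewrite gt_eqF.
  by rewrite ler_pM2l // ler_wpM2l //; have := expR_le_quad _ dt_ge0 dt_le; lra.
pose w := (4 * eta)^-1; have w_gt0 : 0 < w by rewrite invr_gt0 mulr_gt0.
have := opt.2 _ _ _ (feasX_lower_truncate i d opt.1).
rewrite !h_etaE exp_mass_lower_at -/w -/K => le.
have sqw := ler_wpM2l (ltW w_gt0) (sum_sq_truncate_row t i d).
rewrite -(ler_pM2l (_ : 0 < 2 * w)) ?mulr_gt0 //.
have -> : 2 * w * (d * (2 * eta * K) + d ^+ 2 * (n%:R / 2 + 4 * eta * K / tau)) =
          w * (n%:R * d ^+ 2) + K * d + 2 * K * d ^+ 2 / tau.
  by rewrite /w; field; rewrite !gt_eqF.
lra.
Qed.

Lemma optimal_row_sum_le i : \sum_j t i j <= 2 * eta * (expR (- u i / tau) * a i).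
Proof.
apply: (ler_of_forall_small _ _ _ _ _ _ (optimal_row_perturb i)).
  by rewrite divr_gt0.
by rewrite addr_ge0 ?divr_ge0 ?mulr_ge0 ?expR_ge0 ?ler0n ?ltW.
Qed.

Lemma optimal_entry_le i j : t i j <= eta * (\sum_i a i + \sum_j b j).
Proof.
apply: le_trans (_ : \sum_k t i k <= _).
  by apply: (ler_sum_term (t i)) => k; have [] := opt.1 i k.
apply: le_trans (optimal_row_sum_le i) _.
by have := optimal_exp_term_le i; have := eta_gt0; nra.
Qed.

End OptimalSolution.





Section OptimalSolutionBounds.

Context {R : realType} {n : nat} {C : 'M[R]_n} {a b : 'I_n -> R} {tau eta : R}.
Context {u v : 'I_n -> R} {t : 'M[R]_n}.
Hypotheses (a_gt0 : forall i, 0 < a i) (b_gt0 : forall j, 0 < b j).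
Hypotheses (tau_gt0 : 0 < tau) (eta_gt0 : 0 < eta).
Hypothesis C_ge0 : forall i j, 0 <= C i j.
Hypothesis opt : is_optimal C tau eta a b u v t.

Lemma optimal_v_ge j : tau * ln (2 * b j / (\sum_i a i + \sum_j b j)) <= v j.
Proof.
rewrite addrC; apply: optimal_u_ge b_gt0 a_gt0 tau_gt0 eta_gt0 _ (is_optimal_tr opt) j.
by move=> i' j'; rewrite mxE.
Qed.

Lemma optimal_u_le i j : u i <= C i j + eta * (\sum_i a i + \sum_j b j)
  + tau * ln ((\sum_i a i + \sum_j b j) / 2) - tau * ln (b j).
Proof.
have [_ le_t] := opt.1 i j.
have := optimal_entry_le a_gt0 b_gt0 tau_gt0 eta_gt0 C_ge0 opt i j.
have := optimal_v_ge j; rewrite ln_mul2_div ?sumrD_gt0 //; lra.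
Qed.

Lemma optimal_v_le i j : v j <= C i j + eta * (\sum_i a i + \sum_j b j)
  + tau * ln ((\sum_i a i + \sum_j b j) / 2) - tau * ln (a i).
Proof.
have [_ le_t] := opt.1 i j.
have := optimal_entry_le a_gt0 b_gt0 tau_gt0 eta_gt0 C_ge0 opt i j.
have := optimal_u_ge a_gt0 b_gt0 tau_gt0 eta_gt0 C_ge0 opt i.
rewrite ln_mul2_div ?sumrD_gt0 //; lra.
Qed.

End OptimalSolutionBounds.

Theorem corollary1 (R : realType) (n : nat) (hn : (1 <= n)%N)
  (C : 'M[R]_n) (hC : forall i j, 0 <= C i j)
  (a b : 'I_n -> R) (ha : forall i, 0 < a i) (hb : forall i, 0 < b i)
  (tau eta : R) (htau : 0 < tau) (heta : 0 < eta)
  (u v : 'I_n -> R) (t : 'M[R]_n)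
  (hopt : is_optimal C tau eta a b u v t) :
  let alpha := \sum_(i < n) a i in
  let beta := \sum_(i < n) b i in
  let amin := \big[Num.min/a (Ordinal hn)]_(i < n) a i in
  let bmin := \big[Num.min/b (Ordinal hn)]_(i < n) b i in
  let D := mx_infnorm C + eta * (alpha + beta) + tau * ln ((alpha + beta) / 2)
           - tau * Num.min (ln amin) (ln bmin) in
  forall i j : 'I_n,
    tau * ln (2 * a i / (alpha + beta)) <= u i <= D /\
    tau * ln (2 * b j / (alpha + beta)) <= v j <= D.
Proof.
move=> alpha beta amin bmin D i j.
have amin_gt0 : 0 < amin by apply/bigmin_gtP.
have bmin_gt0 : 0 < bmin by apply/bigmin_gtP.
have min_le_a : tau * Num.min (ln amin) (ln bmin) <= tau * ln (a i).
  by rewrite ler_pM2l // ge_min ler_ln ?posrE ?bigmin_le.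
have min_le_b : tau * Num.min (ln amin) (ln bmin) <= tau * ln (b j).
  by rewrite ler_pM2l // ge_min orbC ler_ln ?posrE ?bigmin_le.
have C_le := mx_infnorm_ge C i j.
split; apply/andP; split.
- exact: optimal_u_ge ha hb htau heta hC hopt i.
- by have := optimal_u_le ha hb htau heta hC hopt i j; rewrite /D /alpha /beta; lra.
- exact: optimal_v_ge ha hb htau heta hC hopt j.
- by have := optimal_v_le ha hb htau heta hC hopt i j; rewrite /D /alpha /beta; lra.
Qed.
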